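(* Let $N\ge 3$ and $m\ge 1$ be integers, and let $\Gamma=\Gamma^1_{A_{N-3}}$ be the stable translation quiver of diagonals of a regular $N$-gon, with translation $\tau_1$. Consider its $m$-th power $(\Gamma^m,\tau_1^m)$. (1) The quiver $\Gamma^m$ contains the translation quiver of $m$-diagonals if and only if $N=nm+2$ for some positive integer $n$. More precisely: if $N$ is not of this form, the $N$-gon has no $m$-diagonals. If $N=nm+2$, the subquiver of $\Gamma^m$ formed by the $m$-diagonals and all arrows of $\Gamma^m$ between them coincides with $\Gamma^m_{A_{n-1}}$. (2) For every $n\ge 2$, $\Gamma^m_{A_{n-1}}$ (with translation $\tau_m=\tau_1^m$) is a connected component of $(\Gamma^1_{A_{nm-1}})^m$.
   Context: Let $\Pi$ be a regular $N$-gon with vertices labelled $1,\dots,N$ clockwise; labels are taken modulo $N$. A diagonal with endpoints $i,j$ is written $(i,j)=(j,i)$. The quiver $\Gamma^1_{A_{N-3}}$ has as vertices all diagonals of $\Pi$. There is an arrow $D\to D'$ exactly when $D,D'$ share an endpoint $i$, with other endpoints $j,j'$, such that $D$, $D'$ and the arc from $j$ to $j'$ not containing $i$ form a triangle, and $D$ is rotated onto $D'$ by a clockwise rotation about $i$; i.e. $(i,j)\to(i,j+1)$. The translation $\tau_1$ is the anticlockwise rotation about the centre through $2\pi/N$, i.e. $(i,j)\mapsto(i-1,j-1)$. For $m\ge 1$, an $m$-diagonal of an $(nm+2)$-gon is a diagonal dividing it into an $(mj+2)$-gon and an $(m(n-j)+2)$-gon for some $1\le j\le n-1$; more generally, an $m$-diagonal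 of the $N$-gon is a diagonal dividing it into two polygons whose numbers of sides are both congruent to $2$ modulo $m$. The quiver $\Gamma^m_{A_{n-1}}$ has as vertices the $m$-diagonals of the $(nm+2)$-gon, with an arrow $(i,j)\to(i,j+m)$ whenever both are $m$-diagonals. Equivalently, there is an arrow $D\to D'$ when they share an endpoint $i$, bound an $(m+2)$-gon together with the arc between their other endpoints not containing $i$, and $D$ rotates clockwise about $i$ onto $D'$. Its translation $\tau_m$ is the rotation $(i,j)\mapsto(i-m,j-m)$. For a stable translation quiver $(\Gamma,\tau)$, a path $x_0\to\cdots\to x_m$ is sectional if $\tau x_{i+1}\ne x_{i-1}$ for $i=1,\dots,m-1$. The quiver $\Gamma^m$ has the same vertices as $\Gamma$ and one arrow $x\to y$ for each sectional path of length $m$ from $x$ to $y$; $\tau^m$ is the $m$-fold composite of $\tau$. A connected component is a stable translation subquiver that is connected (not a disjoint union of two non-empty stable translation subquivers) and is a union of connected components of the underlying graph. *)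

From mathcomp Require Import all_boot.
Set Implicit Arguments. Unset Strict Implicit. Unset Printing Implicit Defensive.

(* Vertices of the regular N-gon are 'I_N = {0,...,N-1}, labelled clockwise
   (label k here stands for label k+1 of the paper); arithmetic mod N. *)

Lemma ord_pos N (i : 'I_N) : 0 < N.
Proof. exact: leq_ltn_trans (leq0n i) (ltn_ord i). Qed.

Definition shift N (i : 'I_N) (k : nat) : 'I_N :=
  Ordinal (ltn_pmod (i + k) (ord_pos i)).

Definition gap N (i j : 'I_N) : nat := (j + (N - i)) %% N.

Definition isdiag N (D : {set 'I_N}) : bool :=
  (#|D| == 2) &&
  [forall i in D, forall j in D,
     (i != j) ==> (2 <= gap i j) && (gap i j <= N - 2)].

(* m-diagonal: the diagonal {i,j} cuts the N-gon into the polygon with vertices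
   i, i+1, ..., j  (gap i j + 1 sides) and the one with vertices j, ..., i
   (N - gap i j + 1 sides); both numbers must be congruent to 2 mod m. *)
Definition mdiag N (m : nat) (D : {set 'I_N}) : bool :=
  isdiag D &&
  [forall i in D, forall j in D,
     (i != j) ==> ((gap i j).+1 == 2 %[mod m]) && ((N - gap i j).+1 == 2 %[mod m])].

Definition arrow1 N (D D' : {set 'I_N}) : bool :=
  isdiag D && isdiag D' &&
  [exists i, exists j, (D == [set i; j]) && (D' == [set i; shift j 1])].

(* translation tau_1 : (i,j) |-> (i-1,j-1) *)
Definition tau1 N (D : {set 'I_N}) : {set 'I_N} :=
  (fun i => shift i N.-1) @: D.

Definition arrowm N (m : nat) (D D' : {set 'I_N}) : bool :=
  mdiag m D && mdiag m D' &&
  [exists i, exists j, (D == [set i; j]) && (D' == [set i; shift j m])].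

(* translation tau_m : (i,j) |-> (i-m,j-m) *)
Definition taum N (m : nat) (D : {set 'I_N}) : {set 'I_N} :=
  (fun i => shift i (m * N.-1)) @: D.

Definition sectional N (p : seq {set 'I_N}) : bool :=
  [forall i : 'I_(size p).-1, arrow1 (nth set0 p i) (nth set0 p i.+1)] &&
  [forall i : 'I_(size p).-1,
     (0 < i) ==> (tau1 (nth set0 p i.+1) != nth set0 p i.-1)].

(* number of arrows x -> y in Gamma^m = number of sectional paths of length m
   from x to y *)
Definition npaths N (m : nat) (x y : {set 'I_N}) : nat :=
  #|[pred p : m.+1.-tuple {set 'I_N} |
       sectional p && (nth set0 p 0 == x) && (nth set0 p m == y)]|.

Definition taupow N (m : nat) (D : {set 'I_N}) : {set 'I_N} := iter m (@tau1 N) D.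

(* S is a connected component of the stable translation quiver (Gamma^m, tau_1^m):
   nonempty; a stable translation subquiver (stable under tau^m and tau^-m, with
   the mesh condition #arrows(y->x) = #arrows(tau x -> y)); a union of connected
   components of the underlying graph; and not a disjoint union of two nonempty
   stable translation subquivers. *)
Definition is_component N (m : nat) (S : pred {set 'I_N}) : Prop :=
  [/\ exists x, S x,
      forall x, S x = S (taupow m x),
      forall x y, S x -> S y -> npaths m y x = npaths m (taupow m x) y,
      forall x y, 0 < npaths m x y -> S x = S y
    & forall A B : {set {set 'I_N}},
        (forall x, S x = (x \in A) || (x \in B)) ->
        [disjoint A & B] ->
        (forall x, (x \in A) = (taupow m x \in A)) ->
        (forall x, (x \in B) = (taupow m x \in B)) ->
        (forall x y, x \in A -> y \in B -> npaths m x y = 0 /\ npaths m y x = 0) ->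
        A = set0 \/ B = set0].

From mathcomp Require Import all_boot zify.
Set Implicit Arguments. Unset Strict Implicit. Unset Printing Implicit Defensive.

(* A sectional path of length m in Gamma^1 never changes its pivot: turning
   from rotation about i to rotation about the other endpoint produces exactly
   the relation tau x_(t+1) = x_(t-1) that sectionality forbids.  So every
   sectional path rotates {i, j} into {i, j+m} through diagonals, and for m < N
   there is at most one such path between two vertices.  Rotating about i adds
   m to the clockwise gap from i, which keeps the two sides of the cut
   congruent to 2 mod m; hence between m-diagonals the arrows of Gamma^m are
   those of Gamma^m_(A_(n-1)), and no arrow leaves the m-diagonals.  An
   m-diagonal (i, j) with gap i j = am+1 forces N = nm+2 with a < n.  Finally
   tau_1^m = tau_m, and the arrows (i, i+am+1) -> (i, i+(a+1)m+1) together
   with tau_m link all m-diagonals, which makes them a single component. *)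

Lemma shiftA N (i : 'I_N) a b : shift (shift i a) b = shift i (a + b).
Proof. by apply: val_inj; rewrite /= modnDml addnA. Qed.

Lemma shift0 N (i : 'I_N) : shift i 0 = i.
Proof. by apply: val_inj; rewrite /= addn0 modn_small. Qed.

Lemma shift_eqmod N (i : 'I_N) a b : a = b %[mod N] -> shift i a = shift i b.
Proof. by move=> eq_ab; apply: val_inj; rewrite /= -modnDmr eq_ab modnDmr. Qed.

Lemma shift_mulN N (i : 'I_N) k : shift i (k * N) = i.
Proof. by rewrite -[RHS]shift0; apply: shift_eqmod; rewrite modnMl mod0n. Qed.

Lemma shiftK N m : cancel (fun i : 'I_N => shift i m) (fun i => shift i (m * N.-1)).
Proof.
move=> i; rewrite shiftA -[m in m + _]muln1 -mulnDr add1n prednK ?shift_mulN //.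
exact: ord_pos i.
Qed.

Lemma shiftVK N m : cancel (fun i : 'I_N => shift i (m * N.-1)) (fun i => shift i m).
Proof. by move=> i; rewrite !shiftA addnC -shiftA shiftK. Qed.

Lemma shift_inj N k : injective (fun i : 'I_N => shift i k).
Proof. exact: can_inj (@shiftK N k). Qed.

Lemma gap_shift N (i : 'I_N) k : gap i (shift i k) = k %% N.
Proof.
rewrite /gap /= modnDml.
have -> : i + k + (N - i) = k + N by have := ltn_ord i; lia.
by rewrite modnDr.
Qed.

Lemma shift_gap N (i j : 'I_N) : shift i (gap i j) = j.
Proof.
apply: val_inj; rewrite /= /gap modnDmr.
have -> : i + (j + (N - i)) = j + N by have := ltn_ord i; lia.
by rewrite modnDr modn_small.
Qed.

Lemma shift_gapD N (i j : 'I_N) t : shift j t = shift i (gap i j + t).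
Proof. by rewrite -shiftA shift_gap. Qed.

Lemma gap_ltn N (i j : 'I_N) : gap i j < N.
Proof. exact: ltn_pmod (ord_pos i). Qed.

Lemma gap_eq0 N (i j : 'I_N) : (gap i j == 0) = (i == j).
Proof.
apply/eqP/eqP => [g0|->]; last by rewrite -[X in gap _ X]shift0 gap_shift mod0n.
by rewrite -(shift_gap i j) g0 shift0.
Qed.

Lemma gapxx N (i : 'I_N) : gap i i = 0.
Proof. by apply/eqP; rewrite gap_eq0. Qed.

Lemma gapC N (i j : 'I_N) : i != j -> gap j i = N - gap i j.
Proof.
rewrite -gap_eq0 -lt0n => g_gt0; have g_lt := gap_ltn i j.
have {1}-> : i = shift j (N - gap i j).
  rewrite -[X in shift X _](shift_gap i j); rewrite shiftA subnKC; last exact: ltnW.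
  by rewrite -[X in shift _ X]mul1n shift_mulN.
by rewrite gap_shift modn_small //; lia.
Qed.

Lemma gap_shift2 N (i j : 'I_N) k : gap (shift i k) (shift j k) = gap i j.
Proof.
rewrite -[in shift j k](shift_gap i j) shiftA addnC -shiftA gap_shift modn_small //.
exact: gap_ltn.
Qed.

Lemma set2_eqVswap (T : finType) (a b c d : T) : a != b ->
  [set a; b] = [set c; d] -> (a = c /\ b = d) \/ (a = d /\ b = c).
Proof.
move=> neq_ab eq_ab_cd.
have := set21 a b; have := set22 a b; rewrite eq_ab_cd !in_set2.
case/orP=> /eqP eq_b; case/orP=> /eqP eq_a; [|by right|by left|];
  by move: neq_ab; rewrite eq_a eq_b eqxx.
Qed.

Lemma imset_set2 (T T' : finType) (f : T -> T') a b : f @: [set a; b] = [set f a; f b].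
Proof. by rewrite imsetU1 imset_set1. Qed.

Lemma isdiag_set2P N (D : {set 'I_N}) : isdiag D -> exists i j, D = [set i; j].
Proof. by case/andP=> /cards2P[i [j [_ ->]]] _; exists i, j. Qed.

Lemma isdiag_neq N (i j : 'I_N) : isdiag [set i; j] -> i != j.
Proof. by rewrite /isdiag cards2; case: (i != j). Qed.

Lemma forall_set2_gap N (P : nat -> bool) (i j : 'I_N) : i != j ->
  [forall x in [set i; j], forall y in [set i; j], (x != y) ==> P (gap x y)]
  = P (gap i j) && P (N - gap i j).
Proof.
move=> neq_ij; apply/forall_inP/andP => [P_set2|[P_ij P_ji] x x_ij].
  have P_gap x y : x \in [set i; j] -> y \in [set i; j] -> x != y -> P (gap x y).
    by move=> x_ij y_ij; apply/implyP/(forall_inP (P_set2 x x_ij)).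
  by rewrite -gapC // !P_gap ?set21 ?set22 // eq_sym.
apply/forall_inP => y y_ij; apply/implyP => neq_xy.
by move: x_ij y_ij neq_xy; rewrite !in_set2 => /orP[]/eqP-> /orP[]/eqP->;
  rewrite ?eqxx // gapC.
Qed.

Lemma isdiag_set2 N (i j : 'I_N) : isdiag [set i; j] = (2 <= gap i j <= N - 2).
Proof.
rewrite /isdiag cards2; case: (eqVneq i j) => [->|neq_ij]; first by rewrite gapxx.
rewrite (forall_set2_gap (fun g => 2 <= g <= N - 2)) //=.
by have := gap_ltn i j; case: (2 <= gap i j <= N - 2) / andP => // [[]]; lia.
Qed.

Definition mdiag_gap N m g :=
  [&& 2 <= g, g <= N - 2, g.+1 == 2 %[mod m] & (N - g).+1 == 2 %[mod m]].

Lemma mdiag_set2 N m (i j : 'I_N) : mdiag m [set i; j] = mdiag_gap N m (gap i j).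
Proof.
rewrite /mdiag isdiag_set2 /mdiag_gap; case: (eqVneq i j) => [->|neq_ij]; first by rewrite gapxx.
rewrite (forall_set2_gap (fun g => (g.+1 == 2 %[mod m]) && ((N - g).+1 == 2 %[mod m]))) //.
have -> : N - (N - gap i j) = gap i j by have := gap_ltn i j; lia.
by case: (2 <= _); case: (_ <= _); case: (_ == _); case: (_ == _).
Qed.

Lemma mdiag_gapP N m g : 0 < m ->
  reflect (exists a b, [/\ 0 < a, 0 < b, g = a * m + 1 & N = (a + b) * m + 2])
          (mdiag_gap N m g).
Proof.
move=> m_gt0; apply: (iffP and4P) => [[g_ge2 g_le eq_g eq_Ng]|[a [b [a_gt0 b_gt0 -> ->]]]].
  rewrite eqn_mod_dvd in eq_g; last lia.
  rewrite eqn_mod_dvd in eq_Ng; last lia.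
  case/dvdnP: eq_g => a eq_a; case/dvdnP: eq_Ng => b eq_b.
  by exists a, b; split; nia.
have -> : (a * m + 1).+1 = a * m + 2 by lia.
have -> : ((a + b) * m + 2 - (a * m + 1)).+1 = b * m + 2 by rewrite mulnDl; lia.
by rewrite !modnMDl; split; rewrite ?mulnDl; nia.
Qed.

Lemma mdiag_gapDm N m g : 2 <= g -> g + m <= N - 2 ->
  mdiag_gap N m (g + m) = mdiag_gap N m g.
Proof.
move=> g_ge2 gm_le; rewrite /mdiag_gap g_ge2 gm_le.
have -> : (g + m).+1 = g.+1 + m by lia.
have -> : (N - g).+1 = (N - (g + m)).+1 + m by lia.
by rewrite !modnDr (_ : 1 < g + m) 1?(_ : g <= N - 2) //; lia.
Qed.

Lemma mdiag_rot N m k (D : {set 'I_N}) :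
  mdiag m ((fun i => shift i k) @: D) = mdiag m D.
Proof.
case: (boolP (#|D| == 2)) => [/cards2P[i [j [_ ->]]]|card_D].
  by rewrite imset_set2 !mdiag_set2 gap_shift2.
by rewrite /mdiag /isdiag card_imset ?(negbTE card_D) //; exact: shift_inj.
Qed.

Lemma shift_predN_neq N (i : 'I_N) : 1 < N -> shift i N.-1 != i.
Proof. by move=> N_gt1; rewrite eq_sym -gap_eq0 gap_shift modn_small; lia. Qed.

Lemma shiftS_predN N (i : 'I_N) k : shift (shift i k.+1) N.-1 = shift i k.
Proof.
rewrite shiftA; apply: shift_eqmod.
by rewrite addSn -addnS prednK ?modnDr //; exact: ord_pos i.
Qed.

Lemma tau1_set2 N (a b : 'I_N) : tau1 [set a; b] = [set shift a N.-1; shift b N.-1].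
Proof. exact: imset_set2. Qed.

Lemma taupow_taum N m (D : {set 'I_N}) : taupow m D = taum m D.
Proof.
elim: m => [|m IH]; first by rewrite /taum (eq_imset _ (@shift0 N)) imset_id.
rewrite /taupow iterS -/(taupow m D) IH /tau1 /taum -imset_comp.
by apply: eq_imset => i /=; rewrite shiftA mulSn addnC.
Qed.

Definition fan N (i j : 'I_N) (t : nat) : {set 'I_N} := [set i; shift j t].

Definition fan_tuple N m (i j : 'I_N) : m.+1.-tuple {set 'I_N} :=
  Tuple (introT eqP (size_mkseq (fan i j) m.+1)).

Lemma sectionalP N m (p : m.+1.-tuple {set 'I_N}) :
  reflect ((forall t, t < m -> arrow1 (nth set0 p t) (nth set0 p t.+1)) /\
           (forall t, 0 < t < m -> tau1 (nth set0 p t.+1) != nth set0 p t.-1))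
          (sectional p).
Proof.
have size_p t : t < m -> t < (size p).-1 by rewrite size_tuple.
apply: (iffP andP) => [[/forallP arr /forallP nturn]|[arr nturn]]; split.
- by move=> t /size_p lt_tm; exact: (arr (Ordinal lt_tm)).
- by move=> t /andP[t_gt0 /size_p lt_tm]; exact: (implyP (nturn (Ordinal lt_tm)) t_gt0).
- by apply/forallP => -[t /= lt_tm]; apply: arr; rewrite size_tuple in lt_tm.
- apply/forallP => -[t /= lt_tm]; apply/implyP => t_gt0; apply: nturn.
  by rewrite size_tuple in lt_tm; rewrite t_gt0.
Qed.

Lemma sectional_isdiag N m (p : m.+1.-tuple {set 'I_N}) : 0 < m -> sectional p ->
  forall t, t <= m -> isdiag (nth set0 p t).
Proof.
move=> m_gt0 /sectionalP[arr _] t; rewrite leq_eqVlt => /orP[/eqP->|/arr].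
  by have := arr m.-1; rewrite prednK // => /(_ (leqnn _)) /andP[/andP[]].
by case/andP=> /andP[].
Qed.

(* Turning from x_(t+1) = {i, j+t+1} to {j+t+1, i+1} would give
   tau1 x_(t+2) = {j+t, i} = x_t. *)
Lemma sectional_fan N m (p : m.+1.-tuple {set 'I_N}) : 0 < m -> sectional p ->
  exists i j, forall t, t <= m -> nth set0 p t = fan i j t.
Proof.
move=> m_gt0 /sectionalP[arr nturn].
case/andP: (arr 0 m_gt0) => _ /existsP[i /existsP[j /andP[/eqP p0 /eqP p1]]].
exists i, j.
suff fan2 t : t < m -> nth set0 p t = fan i j t /\ nth set0 p t.+1 = fan i j t.+1.
  by case=> [|t] le_tm; [rewrite p0 /fan shift0 | exact: (fan2 t le_tm).2].
elim: t => [|t IH] lt_tm; first by rewrite p0 p1 /fan shift0.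
have [pt pt1] := IH (ltnW lt_tm); split => //.
case/andP: (arr t.+1 lt_tm) => /andP[diag_t1 _] /existsP[a /existsP[b]].
case/andP=> /eqP pa /eqP pb; rewrite pt1 in pa diag_t1; rewrite pb.
case: (set2_eqVswap (isdiag_neq diag_t1) pa) => [[<- <-]|[ib ja]].
  by rewrite /fan shiftA addn1.
have := nturn t.+1 lt_tm; rewrite pb pt -ib -ja tau1_set2 !shiftS_predN shift0.
by rewrite /fan setUC eqxx.
Qed.

Lemma gap_fan N (i j : 'I_N) k : (forall t, t <= k -> isdiag (fan i j t)) ->
  gap i (shift j k) = gap i j + k.
Proof.
elim: k => [|k IH] diag_fan; first by rewrite shift0 addn0.
have := diag_fan k (leqnSn k); rewrite /fan isdiag_set2 IH => [/andP[g_ge2 le_N2]|t le_tk].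
  by rewrite (shift_gapD i) gap_shift modn_small; lia.
exact/diag_fan/leqW.
Qed.

Lemma isdiag_fan N (i j : 'I_N) k t : isdiag (fan i j 0) -> gap i j + k <= N - 2 ->
  t <= k -> isdiag (fan i j t).
Proof.
rewrite /fan shift0 !isdiag_set2 => /andP[g_ge2 _] le_N2 le_tk.
by rewrite (shift_gapD i) gap_shift modn_small; lia.
Qed.

Lemma sectional_fan_tuple N m (i j : 'I_N) :
  (forall t, t <= m -> isdiag (fan i j t)) -> sectional (fan_tuple m i j).
Proof.
move=> diag_fan; have nth_fan t : t <= m -> nth set0 (fan_tuple m i j) t = fan i j t.
  by move=> le_tm; rewrite nth_mkseq.
apply/sectionalP; split => [t lt_tm | t /andP[t_gt0 lt_tm]].
  rewrite !nth_fan ?(ltnW lt_tm) // /arrow1 !diag_fan ?(ltnW lt_tm) //.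
  by apply/existsP; exists i; apply/existsP; exists (shift j t); rewrite shiftA addn1 !eqxx.
have diag_t := diag_fan t (ltnW lt_tm).
have diag_pt : isdiag (fan i j t.-1) by apply: diag_fan; lia.
rewrite !nth_fan ?(ltnW lt_tm) //; last lia.
rewrite /fan tau1_set2 shiftS_predN; apply/eqP => /esym /(set2_eqVswap (isdiag_neq diag_pt)).
case=> [[i_pred _]|[i_jt _]]; last by move: (isdiag_neq diag_t); rewrite i_jt eqxx.
move: diag_t; rewrite /fan isdiag_set2 => /andP[g_ge2 g_le].
have N_gt1 : 1 < N by lia.
by move: (shift_predN_neq i N_gt1); rewrite -i_pred eqxx.
Qed.

Lemma mdiag_size N m (D : {set 'I_N}) : 0 < m -> mdiag m D ->
  exists2 n, 0 < n & N = n * m + 2.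
Proof.
move=> m_gt0 mdiag_D; have /andP[/isdiag_set2P[i [j eq_D]] _] := mdiag_D.
move: mdiag_D; rewrite eq_D mdiag_set2 => /(mdiag_gapP _ _ m_gt0).
by case=> a [b [a_gt0 _ _ ->]]; exists (a + b); rewrite ?addn_gt0 ?a_gt0.
Qed.

Lemma npaths_le1 N m (x y : {set 'I_N}) : 0 < m -> m < N -> npaths m x y <= 1.
Proof.
move=> m_gt0 lt_mN; apply/card_le1_eqP => p q.
rewrite !inE => /andP[/andP[sec_p /eqP p0] /eqP pm] /andP[/andP[sec_q /eqP q0] /eqP qm].
have [i [j fan_p]] := sectional_fan m_gt0 sec_p.
have [i' [j' fan_q]] := sectional_fan m_gt0 sec_q.
have diag_p := sectional_isdiag m_gt0 sec_p.
have neq_ij : i != j by move: (diag_p 0 isT); rewrite fan_p // /fan shift0 => /isdiag_neq.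
have := etrans p0 (esym q0); rewrite fan_p // fan_q // /fan !shift0.
case/(set2_eqVswap neq_ij) => [[ii' jj']|[ij' ji']].
  apply: val_inj; apply: (@eq_from_nth _ set0); first by rewrite !size_tuple.
  by move=> t; rewrite size_tuple ltnS => le_tm; rewrite fan_p ?fan_q // ii' jj'.
have := etrans pm (esym qm); rewrite fan_p // fan_q // /fan -ij' -ji'.
have neq_ijm : i != shift j m by move: (diag_p m (leqnn m)); rewrite fan_p // => /isdiag_neq.
case/(set2_eqVswap neq_ijm) => [[eq_ij _]|[_ eq_i]]; first by rewrite eq_ij eqxx in neq_ij.
by have := gap_shift j m; rewrite eq_i gapxx modn_small //; lia.
Qed.

Lemma npaths_mdiag N m (x y : {set 'I_N}) : 0 < m -> mdiag m x -> mdiag m y ->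
  npaths m x y = arrowm m x y.
Proof.
move=> m_gt0 mdiag_x mdiag_y.
have lt_mN : m < N by case: (mdiag_size m_gt0 mdiag_x) => n n_gt0 ->; nia.
suff -> : arrowm m x y = (0 < npaths m x y).
  by have := npaths_le1 x y m_gt0 lt_mN; case: npaths => [|[]].
rewrite /arrowm mdiag_x mdiag_y /=; apply/existsP/card_gt0P.
- case=> i /existsP[j /andP[/eqP eq_x /eqP eq_y]].
  have diag_x : isdiag (fan i j 0) by rewrite /fan shift0 -eq_x; case/andP: mdiag_x.
  move: mdiag_x; rewrite eq_x mdiag_set2 => /(mdiag_gapP _ _ m_gt0).
  case=> a [b [a_gt0 b_gt0 gap_ij eq_N]].
  have le_N2 : gap i j + m <= N - 2.
    move: mdiag_y; rewrite eq_y mdiag_set2 (shift_gapD i) gap_shift modn_small; last nia.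
    by case/and4P.
  exists (fan_tuple m i j); rewrite inE sectional_fan_tuple; last first.
    by move=> t; apply: isdiag_fan.
  by rewrite !nth_mkseq // /fan shift0 eq_y !eqxx.
- case=> p; rewrite inE => /andP[/andP[sec_p /eqP p0] /eqP pm].
  have [i [j fan_p]] := sectional_fan m_gt0 sec_p.
  exists i; apply/existsP; exists j.
  by rewrite -p0 -pm !fan_p // /fan shift0 !eqxx.
Qed.

Lemma sectional_mdiag N m (p : m.+1.-tuple {set 'I_N}) : 0 < m -> sectional p ->
  mdiag m (nth set0 p 0) = mdiag m (nth set0 p m).
Proof.
move=> m_gt0 sec_p; have [i [j fan_p]] := sectional_fan m_gt0 sec_p.
have diag_fan t : t <= m -> isdiag (fan i j t).
  by move=> le_tm; rewrite -fan_p //; exact: sectional_isdiag.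
have := diag_fan 0 isT; have := diag_fan m (leqnn m).
rewrite !fan_p // /fan shift0 !isdiag_set2 !mdiag_set2 gap_fan //.
by move=> /andP[_ le_N2] /andP[g_ge2 _]; rewrite mdiag_gapDm.
Qed.

Lemma arrowm_taum N m (x y : {set 'I_N}) : arrowm m y x = arrowm m (taum m x) y.
Proof.
rewrite /arrowm /taum mdiag_rot [mdiag m x && _]andbC; congr andb.
apply/existsP/existsP.
- case=> i /existsP[j /andP[/eqP-> /eqP->]].
  exists j; apply/existsP; exists (shift i (m * N.-1)).
  by rewrite imset_set2 shiftK shiftVK setUC eqxx [[set j; i]]setUC eqxx.
- case=> a /existsP[b /andP[/eqP tau_x /eqP->]].
  have -> : x = (fun i => shift i m) @: [set a; b].
    by rewrite -tau_x -imset_comp (eq_imset _ (@shiftVK N m)) imset_id.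
  rewrite imset_set2.
  exists (shift b m); apply/existsP; exists a.
  by rewrite setUC eqxx [[set shift a m; _]]setUC eqxx.
Qed.

Section Component.

Variables n m : nat.
Hypotheses (n_gt1 : 1 < n) (m_gt0 : 0 < m).
Local Notation N := (n * m + 2).

Definition mdiag_at (i : 'I_N) a : {set 'I_N} := [set i; shift i (a * m + 1)].

Lemma mdiag_atP (D : {set 'I_N}) :
  mdiag m D -> exists i a, [/\ 0 < a, a < n & D = mdiag_at i a].
Proof.
move=> mdiag_D; have /andP[/isdiag_set2P[i [j eq_D]] _] := mdiag_D.
move: mdiag_D; rewrite eq_D mdiag_set2 => /(mdiag_gapP _ _ m_gt0).
case=> a [b [a_gt0 b_gt0 gap_ij eq_N]]; exists i, a; split => //; first nia.
by rewrite /mdiag_at -gap_ij shift_gap.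
Qed.

Lemma mdiag_mdiag_at i a : 0 < a -> a < n -> mdiag m (mdiag_at i a).
Proof.
move=> a_gt0 lt_an; rewrite mdiag_set2 gap_shift modn_small; last nia.
by apply/(mdiag_gapP _ _ m_gt0); exists a, (n - a); split; rewrite ?subnKC ?subn_gt0 // ltnW.
Qed.

Lemma arrowm_mdiag_at i a : 0 < a -> a.+1 < n ->
  arrowm m (mdiag_at i a) (mdiag_at i a.+1).
Proof.
move=> a_gt0 lt_an; rewrite /arrowm !mdiag_mdiag_at ?(ltnW lt_an) //=.
apply/existsP; exists i; apply/existsP; exists (shift i (a * m + 1)).
by rewrite shiftA (_ : a * m + 1 + m = a.+1 * m + 1) ?eqxx // mulSn; lia.
Qed.

(* tau_m (i, i+m+1) = (i-m, i+1), and i-m = (i+1) + (n-1)m + 1 modulo nm+2. *)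
Lemma taum_mdiag_at i : taum m (mdiag_at i 1) = mdiag_at (shift i 1) n.-1.
Proof.
rewrite /taum imset_set2 mul1n [m + 1]addnC -shiftA shiftK /mdiag_at setUC; congr [set _; _].
apply: (@shift_inj _ m); rewrite shiftVK !shiftA -[LHS](shift_mulN i 1).
by congr shift; rewrite mul1n; case: n n_gt1 => // n' _; rewrite mulSn /=; lia.
Qed.

Lemma mdiag_connected (A : pred {set 'I_N}) :
  (forall x, A (taum m x) = A x) -> (forall x y, arrowm m x y -> A x = A y) ->
  forall x y, mdiag m x -> mdiag m y -> A x = A y.
Proof.
move=> A_tau A_arr.
have A_at i a : 0 < a -> a < n -> A (mdiag_at i a) = A (mdiag_at i 1).
  elim: a => // a IH _ lt_an; case: (posnP a) => [-> // | a_gt0].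
  by rewrite -IH ?(ltnW lt_an) //; symmetry; exact/A_arr/arrowm_mdiag_at.
have A_at1 i k : A (mdiag_at (shift i k) 1) = A (mdiag_at i 1).
  elim: k => [|k IH]; first by rewrite shift0.
  rewrite -IH -[k.+1]addn1 -shiftA -(A_at _ n.-1) -?taum_mdiag_at ?A_tau //; lia.
move=> x y /mdiag_atP[i [a [a_gt0 lt_an ->]]] /mdiag_atP[i' [a' [a'_gt0 lt_a'n ->]]].
by rewrite !A_at // -(shift_gap i i') A_at1.
Qed.

Lemma mdiag_component : is_component m (fun D : {set 'I_N} => mdiag m D).
Proof.
have mdiag_taupow x : mdiag m (taupow m x) = mdiag m x.
  by rewrite taupow_taum mdiag_rot.
split.
- have N_gt0 : 0 < N by rewrite addn2.
  by exists (mdiag_at (Ordinal N_gt0) 1); exact: mdiag_mdiag_at.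
- by move=> x; rewrite mdiag_taupow.
- move=> x y mdiag_x mdiag_y; rewrite !npaths_mdiag ?mdiag_taupow //.
  by rewrite taupow_taum arrowm_taum.
- move=> x y /card_gt0P[p]; rewrite inE => /andP[/andP[sec_p /eqP <-] /eqP <-].
  exact: sectional_mdiag.
move=> A B AB_S disj_AB A_tau _ no_path.
have [->|[a a_A]] := set_0Vmem A; [by left | right].
have A_arr x y : arrowm m x y -> (x \in A) = (y \in A).
  move=> arr_xy; have /andP[/andP[mdiag_x mdiag_y] _] := arr_xy.
  have npaths_xy : npaths m x y = 1 by rewrite npaths_mdiag // arr_xy.
  have := AB_S x; have := AB_S y; rewrite mdiag_x mdiag_y.
  case: (boolP (x \in A)) => x_A; case: (boolP (y \in A)) => y_A //= /esym y_B /esym x_B.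
    by have := (no_path x y x_A y_B).1; rewrite npaths_xy.
  by have := (no_path y x y_A x_B).2; rewrite npaths_xy.
have A_taum x : (taum m x \in A) = (x \in A) by rewrite [RHS]A_tau taupow_taum.
apply/setP => b; rewrite in_set0; apply/negbTE/negP => b_B.
have mdiag_a : mdiag m a by rewrite AB_S a_A.
have mdiag_b : mdiag m b by rewrite AB_S b_B orbT.
have b_A : b \in A.
  by rewrite -(mdiag_connected (A := fun x => x \in A) A_taum A_arr mdiag_a mdiag_b).
by rewrite (disjointFr disj_AB b_A) in b_B.
Qed.

End Component.

Theorem proposition7p1 :
  (forall N m : nat, 3 <= N -> 1 <= m ->
     ((~ exists n, 0 < n /\ N = n * m + 2) ->
        forall D : {set 'I_N}, ~~ mdiag m D)
     /\
     (forall n, 0 < n -> N = n * m + 2 ->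
        forall D D' : {set 'I_N}, mdiag m D -> mdiag m D' ->
          npaths m D D' = nat_of_bool (arrowm m D D')
          /\ taupow m D = taum m D))
  /\
  (forall n m : nat, 2 <= n -> 1 <= m ->
     is_component m (fun D : {set 'I_(n * m + 2)} => mdiag m D)).
Proof.
split; last exact: mdiag_component.
move=> N m _ m_gt0; split.
  move=> no_size D; apply/negP => /(mdiag_size m_gt0)[n n_gt0 eq_N].
  by apply: no_size; exists n.
move=> n _ _ D D' mdiag_D mdiag_D'.
by rewrite npaths_mdiag // taupow_taum.
Qed.
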